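(* Let $\mathcal G=(V,E,r)$ be a non-null graph, let $m$ be the maximal order (number of vertices) of a connected component of $\mathcal G$, and let $D$ be the maximal vertex degree of $\mathcal G$. (1) For every real $r>D/2$, the function $\sigma_r\colon\mathbf A(\mathcal G)\to\mathbb R_{\ge0}$, $\sigma_r(a)=r\sum_{v\in V}a(v)-\sum_{e\in E}a(e)$, is a semi-length function. (2) $\rho(\mathbf A(\mathcal G))\le m-\frac{m-1}{D}$. (3) If $\mathcal G$ is simple, then $\rho(\mathbf A(\mathcal G))\le m-2+\frac{2}{m}$.
   Context: A graph $\mathcal G=(V,E,r)$ consists of a finite vertex set $V$, a finite edge set $E$ disjoint from $V$, and a map $r$ assigning to each edge a two-element subset of $V$; multiple edges allowed, no loops; simple means no two edges have the same pair of incident vertices. An agglomeration on $\mathcal G$ is a function $a\colon V\cup E\to\mathbb N_0$ with $a(v)\ge a(e)$ whenever $v$ is incident with $e$; $\mathbf A(\mathcal G)$ is the monoid of agglomerations under pointwise addition. A semi-length function is a monoid homomorphism $\sigma\colon\mathbf A(\mathcal G)\to(\mathbb R_{\ge0},+)$ with $\sigma(a)=0$ iff $a=0$. For a reduced atomic monoid $H$, $\mathsf L(a)$ is the set of $k$ such that $a$ is a sum of $k$ atoms, $\rho(a)=\sup\mathsf L(a)/\min\mathsf L(a)$ for $a\ne0$, $\rho(0)=1$, and $\rho(H)=\sup_{a\in H}\rho(a)$. *)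

From HB Require Import structures.
From mathcomp Require Import all_boot all_order all_algebra.
From mathcomp Require Import all_classical all_reals ereal.
Set Implicit Arguments. Unset Strict Implicit. Unset Printing Implicit Defensive.
Import Order.TTheory GRing.Theory Num.Theory.
Local Open Scope classical_set_scope.
Local Open Scope ring_scope.

(* A graph G = (V, E, r): finite vertex type V, finite edge type E, and
   r e = the (ordered representation of the) two-element set of endpoints
   of e; no loops: the two endpoints are distinct.  Multiple edges allowed. *)

Section Graph.
Variables (V E : finType) (ends : E -> V * V).

Definition incident (v : V) (e : E) : bool :=
  (v == (ends e).1) || (v == (ends e).2).

Definition simple_graph : Prop :=
  injective (fun e => [set (ends e).1; (ends e).2]).

Definition degree (v : V) : nat := #|[set e | incident v e]|.

Definition max_degree : nat := (\max_(v : V) degree v)%N.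

Definition adj : rel V :=
  fun u w => [exists e, incident u e && incident w e && (u != w)].

Definition component (v : V) : {set V} := [set u | connect adj v u].

Definition max_comp_order : nat := (\max_(v : V) #|component v|)%N.

Definition agglo (a : V + E -> nat) : Prop :=
  forall v e, incident v e -> (a (inr e) <= a (inl v))%N.

Definition azero : V + E -> nat := fun _ => 0%N.
Definition aadd (a b : V + E -> nat) : V + E -> nat := fun x => (a x + b x)%N.

Definition is_atom (a : V + E -> nat) : Prop :=
  agglo a /\ a <> azero /\
  forall b c, agglo b -> agglo c -> a = aadd b c -> b = azero \/ c = azero.

Definition lengths (a : V + E -> nat) : set nat :=
  [set k | exists s : seq (V + E -> nat),
      size s = k /\ (forall i, (i < size s)%N -> is_atom (nth azero s i)) /\
      a = foldr aadd azero s].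

Definition min_length (a : V + E -> nat) : nat :=
  xget 0%N [set k | lengths a k /\ forall j, lengths a j -> (k <= j)%N].

Definition semi_length (R : realType) (sigma : (V + E -> nat) -> R) : Prop :=
  (forall a, agglo a -> 0 <= sigma a) /\
  sigma azero = 0 /\
  (forall a b, agglo a -> agglo b -> sigma (aadd a b) = sigma a + sigma b) /\
  (forall a, agglo a -> (sigma a = 0 <-> a = azero)).

Definition sigma_r (R : realType) (r : R) (a : V + E -> nat) : R :=
  r * \sum_(v : V) (a (inl v))%:R - \sum_(e : E) (a (inr e))%:R.

Definition rho_elt (R : realType) (a : V + E -> nat) : \bar R :=
  if `[< a = azero >] then 1%E
  else (ereal_sup [set (k%:R)%:E | k in lengths a] *
        ((min_length a)%:R^-1)%:E)%E.

Definition rho_monoid (R : realType) : \bar R :=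
  ereal_sup [set rho_elt R a | a in agglo].

End Graph.

From HB Require Import structures.
From mathcomp Require Import all_boot all_order all_algebra.
From mathcomp Require Import all_classical all_reals ereal.
From mathcomp Require Import ring lra zify.
Import Order.TTheory GRing.Theory Num.Theory.
Local Open Scope ring_scope.

(* An atom u of A(G) is 0/1-valued and its support is connected: its vertex
   set W (of size w <= m) is spanned by its edge set F, so w - 1 <= |F|; every
   edge of F has both ends in W, so 2|F| <= D w, and |F| <= C(w, 2) if G is
   simple.  As sigma_r is additive, if lo <= sigma_r u <= hi for every atom u,
   then any factorisation of a into k atoms has k lo <= sigma_r a <= k hi, so
   any two factorisation lengths have ratio at most hi / lo.  With r = D one
   gets D <= sigma_D u <= (D - 1) m + 1, and for simple G, with r = m / 2,
   m / 2 <= sigma u <= (m / 2 - 1) m + 1.  Positivity of sigma_r for r > D / 2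
   is the handshake inequality 2 sum_e a(e) <= D sum_v a(v). *)

Lemma card_merge_pairs {T : finType} (W : {set T}) (p : seq (T * T)) :
  exists c : T -> T,
    {in p, forall x, c x.1 = c x.2} /\ (#|W| <= #|c @: W| + size p)%N.
Proof.
elim: p => [|[x y] p [c [merged leW]]].
  by exists id; split => //; rewrite card_imset ?addn0.
pose c' z := if c z == c y then c x else c z.
exists c'; split.
  move=> z; rewrite in_cons /c' => /predU1P [-> | pz] /=.
    by rewrite eqxx; case: ifP.
  by rewrite (merged z pz).
have sub : c @: W \subset c y |: c' @: W.
  apply/fintype.subsetP => _ /imsetP [z zW ->]; rewrite in_setU1.
  have [//|neq] := eqVneq (c z) (c y).
  by apply/orP; right; apply/imsetP; exists z => //; rewrite /c' (negbTE neq).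
move: (subset_leq_card sub); rewrite cardsU1 /=; lia.
Qed.

Lemma sum_le1_card {T : finType} (f : T -> nat) : (forall x, f x <= 1)%N ->
  (\sum_x f x)%N = #|[set x | f x != 0%N]|.
Proof.
move=> f_le1; rewrite -sum1_card [RHS]big_mkcond; apply: eq_bigr => x _.
by rewrite inE; have := f_le1 x; case: (f x) => [|[|]].
Qed.

Lemma natr_sub2_mul_ge0 {R : realDomainType} {m w : nat} :
  (1 <= w)%N -> (w <= m)%N -> 0 <= (m%:R - 2) * (m%:R - w%:R) :> R.
Proof.
move=> w_ge1 w_le_m; have [m_le1 | m_gt1] := leqP m 1.
  by rewrite (_ : w = m) ?subrr ?mulr0 //; apply/eqP; rewrite eqn_leq w_le_m; lia.
by apply: mulr_ge0; rewrite subr_ge0 ler_nat.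
Qed.

Section Graph.
Variables (R : realType) (V E : finType) (ends : E -> V * V).
Hypothesis noloop : forall e, (ends e).1 != (ends e).2.

Local Notation agglo := (agglo ends).
Local Notation is_atom := (is_atom ends).
Local Notation azero := (@azero V E).
Local Notation sigma_r := (@sigma_r V E R).
Local Notation D := (max_degree ends).
Local Notation m := (max_comp_order ends).

Lemma incident_ends1 e : incident ends (ends e).1 e.
Proof. by rewrite /incident eqxx. Qed.

Lemma incident_ends2 e : incident ends (ends e).2 e.
Proof. by rewrite /incident eqxx orbT. Qed.

Lemma adj_ends e : adj ends (ends e).1 (ends e).2 && adj ends (ends e).2 (ends e).1.
Proof.
by apply/andP; split; apply/existsP; exists e;
  rewrite incident_ends1 incident_ends2 ?noloop // eq_sym noloop.
Qed.

Lemma max_comp_order_gt0 : (0 < #|V|)%N -> (0 < m)%N.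
Proof.
case/card_gt0P => v _; apply: leq_trans (leq_bigmax_cond v isT).
by apply/card_gt0P; exists v; rewrite inE connect0.
Qed.

Lemma agglo_eq0 a : agglo a -> (forall v, a (inl v) = 0%N) -> a = azero.
Proof.
move=> ag a0; apply: funext => -[v|e] //.
by have := ag _ e (incident_ends1 e); rewrite a0 leqn0 => /eqP.
Qed.

Lemma sum_incident v : (\sum_e incident ends v e)%N = degree ends v.
Proof.
rewrite /degree -sum1_card [RHS]big_mkcond /=.
apply: eq_bigr => e _.
by rewrite unfold_in asboolb; case: incident.
Qed.

Lemma agglo_handshake {a} : agglo a ->
  (2 * \sum_e a (inr e) <= D * \sum_v a (inl v))%N.
Proof.
move=> ag.
have edge_le e : (2 * a (inr e) <= \sum_v incident ends v e * a (inl v))%N.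
  rewrite (bigD1 (ends e).1) // (bigD1 (ends e).2) /=; last by rewrite eq_sym noloop.
  rewrite incident_ends1 incident_ends2 !mul1n.
  have := ag _ _ (incident_ends1 e); have := ag _ _ (incident_ends2 e); lia.
rewrite big_distrr /=.
apply: (@leq_trans (\sum_e \sum_v incident ends v e * a (inl v))%N).
  by apply: leq_sum => e _; exact: edge_le.
rewrite exchange_big big_distrr; apply: leq_sum => v _.
by rewrite -big_distrl sum_incident leq_mul2r leq_bigmax_cond ?orbT.
Qed.

Definition vsupp (a : V + E -> nat) := [set v | a (inl v) != 0%N].
Definition esupp (a : V + E -> nat) := [set e | a (inr e) != 0%N].

Lemma atom_le1 {u} : is_atom u -> forall x, (u x <= 1)%N.
Proof.
move=> [ag [_ indec]] x; rewrite leqNgt; apply/negP => ux.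
have agl : agglo (fun y => minn (u y) 1) by move=> v e /ag; lia.
have agr : agglo (fun y => u y - 1)%N by move=> v e /ag; lia.
have [] := indec _ _ agl agr; first by apply: funext => y; rewrite /aadd; lia.
all: by move/(congr1 (fun f => f x)); rewrite /azero; lia.
Qed.

Lemma atom_vsupp_gt0 {u} : is_atom u -> (0 < #|vsupp u|)%N.
Proof.
move=> [ag [u0 _]]; apply/card_gt0P.
have [v uv | none] := pickP (fun v => u (inl v) != 0%N).
  by exists v; rewrite inE.
by case: u0; apply: agglo_eq0 => // v; apply/eqP/negbFE/none.
Qed.

Lemma esupp_ends {u e} : agglo u -> e \in esupp u ->
  ((ends e).1 \in vsupp u) && ((ends e).2 \in vsupp u).
Proof.
move=> ag; rewrite !inE.
by have := ag _ _ (incident_ends1 e); have := ag _ _ (incident_ends2 e); lia.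
Qed.

(* An atom cannot be split along a labelling that is constant on its edges:
   the part carried by one label class and the rest would decompose it. *)
Lemma atom_label_const {T : eqType} (c : V -> T) {u} : is_atom u ->
  (forall e, e \in esupp u -> c (ends e).1 = c (ends e).2) ->
  {in vsupp u &, forall v w, c v = c w}.
Proof.
move=> [ag [_ indec]] cE v0 w; rewrite !inE => uv0 uw; apply/eqP/contraT => neq.
pose in_class (x : V + E) :=
  match x with inl v => c v == c v0 | inr e => c (ends e).1 == c v0 end.
pose part b x := if in_class x == b then u x else 0%N.
have classE v e : incident ends v e -> e \in esupp u ->
    in_class (inl v) = in_class (inr e).
  by move=> /orP [/eqP-> | /eqP->] eu //=; rewrite (cE e eu).
have ag_part b : agglo (part b).
  move=> v e ve; rewrite /part; have [eu|] := boolP (e \in esupp u).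
    by rewrite (classE v e ve eu); case: ifP => // _; exact: ag.
  by rewrite inE negbK => /eqP ->; case: ifP.
have [] := indec _ _ (ag_part true) (ag_part false).
  by apply: funext => x; rewrite /aadd /part; case: (in_class x); rewrite ?addn0.
  move/(congr1 (fun f => f (inl v0))); rewrite /part /= eqxx.
  by move/eqP; rewrite (negbTE uv0).
move/(congr1 (fun f => f (inl w))); rewrite /part /= (eq_sym (c w)) (negbTE neq) /=.
by move/eqP; rewrite (negbTE uw).
Qed.

(* Merging the two ends of each edge of an atom leaves a single vertex class. *)
Lemma atom_vsupp_le_esupp {u} : is_atom u -> (#|vsupp u| <= #|esupp u| + 1)%N.
Proof.
move=> atom_u.
have [c [merged]] := card_merge_pairs (vsupp u) [seq ends e | e <- enum (esupp u)].
rewrite size_map -cardE => /leq_trans; apply; rewrite addnC leq_add2l.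
have [v0 uv0] := card_gt0P (atom_vsupp_gt0 atom_u).
rewrite -(cards1 (c v0)); apply/subset_leq_card/fintype.subsetP => _ /imsetP [v uv ->].
rewrite inE (atom_label_const c atom_u _ _ _ uv uv0) // => e eu.
by apply: merged; apply: map_f; rewrite mem_enum.
Qed.

Lemma atom_vsupp_le_max_comp {u} : is_atom u -> (#|vsupp u| <= m)%N.
Proof.
move=> atom_u; have [v0 uv0] := card_gt0P (atom_vsupp_gt0 atom_u).
apply: leq_trans (leq_bigmax_cond v0 isT).
apply/subset_leq_card/fintype.subsetP => v uv.
have conn_edge e : e \in esupp u ->
    connect (adj ends) v0 (ends e).1 = connect (adj ends) v0 (ends e).2.
  move=> _; have /andP [a12 a21] := adj_ends e.
  by apply/idP/idP => /connect_trans; apply; apply: connect1.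
by rewrite /component inE /= -(atom_label_const _ atom_u conn_edge _ _ uv0 uv) connect0.
Qed.

Lemma atom_handshake {u} : is_atom u -> (2 * #|esupp u| <= D * #|vsupp u|)%N.
Proof.
move=> atom_u; have := agglo_handshake (proj1 atom_u).
by rewrite !sum_le1_card // => x; apply: atom_le1.
Qed.

Lemma agglo_vsupp_gt1 {u} : agglo u -> (0 < #|esupp u|)%N -> (1 < #|vsupp u|)%N.
Proof.
move=> ag /card_gt0P [e /(esupp_ends ag) /andP [e1 e2]].
have := cards2 (ends e).1 (ends e).2; rewrite noloop => <-.
by apply/subset_leq_card/fintype.subsetP => x /set2P [->|->].
Qed.

Lemma simple_esupp_le_bin2 {u} : simple_graph ends -> agglo u ->
  (#|esupp u| <= 'C(#|vsupp u|, 2))%N.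
Proof.
move=> simple ag.
have pair_inj : injective (fun e => [set (ends e).1; (ends e).2] : {set V}).
  have pairE (a b x : V) : [set a; b]%classic x <-> x \in [set a; b].
    rewrite !inE; split; first by move=> [] ->; rewrite eqxx ?orbT.
    by move=> /orP [] /eqP ->; [left | right].
  move=> e f ef; apply: simple; apply: funext => x; apply: propext.
  by rewrite !pairE ef.
rewrite -cards_draws -(card_imset _ pair_inj).
apply/subset_leq_card/fintype.subsetP => _ /imsetP [e eu ->].
have /andP [e1 e2] := esupp_ends ag eu.
rewrite inE cards2 noloop andbT.
by apply/fintype.subsetP => x /set2P [->|->].
Qed.

Lemma sigma_r_add (r : R) a b : sigma_r r (aadd a b) = sigma_r r a + sigma_r r b.
Proof.
rewrite /sigma_r /aadd.
under eq_bigr do rewrite natrD.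
under [X in _ - X]eq_bigr do rewrite natrD.
rewrite !big_split /=; ring.
Qed.

Lemma sigma_r_azero (r : R) : sigma_r r azero = 0.
Proof. by rewrite /sigma_r !big1 ?mulr0 ?subr0. Qed.

Lemma sigma_r_ge (r : R) {a} : agglo a ->
  (r - D%:R / 2) * \sum_v (a (inl v))%:R <= sigma_r r a.
Proof.
move=> /agglo_handshake; rewrite -(ler_nat R) !natrM !natr_sum /sigma_r => hs.
rewrite mulrBl mulrAC; lra.
Qed.

Lemma sigma_r_semi_length (r : R) : D%:R / 2 < r -> semi_length ends (sigma_r r).
Proof.
move=> r_gt.
have sum_ge0 (a : V + E -> nat) : 0 <= \sum_v (a (inl v))%:R :> R.
  exact: sumr_ge0.
have sigma_ge0 a : agglo a -> 0 <= sigma_r r a.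
  move=> /(sigma_r_ge r); apply: le_trans; apply: mulr_ge0 => //; lra.
split; first exact: sigma_ge0.
split; first exact: sigma_r_azero.
split; first by move=> a b _ _; apply: sigma_r_add.
move=> a ag; split=> [sigma0|->]; last exact: sigma_r_azero.
have : \sum_v (a (inl v))%:R = 0 :> R.
  apply/eqP; rewrite eq_le sum_ge0 andbT.
  rewrite -(pmulr_rle0 _ (_ : 0 < r - D%:R / 2)) ?subr_gt0 //.
  by rewrite -[leRHS]sigma0 sigma_r_ge.
rewrite -natr_sum => /eqP; rewrite pnatr_eq0 sum_nat_eq0 => /forallP a0.
by apply: agglo_eq0 => // v; apply/eqP/a0.
Qed.

Lemma sigma_r_atom (r : R) {u} : is_atom u ->
  sigma_r r u = r * #|vsupp u|%:R - #|esupp u|%:R.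
Proof. by move=> /atom_le1 u_le1; rewrite /sigma_r -!natr_sum !sum_le1_card. Qed.

Section AtomBounds.
Variables (r lo hi : R).
Hypotheses (lo_gt0 : 0 < lo) (lo_le_hi : lo <= hi).
Hypothesis sigma_atom : forall u, is_atom u -> lo <= sigma_r r u <= hi.

Lemma lengths_sigma_bounds {a k} : lengths ends a k ->
  k%:R * lo <= sigma_r r a <= k%:R * hi.
Proof.
case=> s [<- [atoms ->]] {a k}; elim: s atoms => [|x s IH] atoms /=.
  by rewrite sigma_r_azero !mul0r lexx.
have /sigma_atom /andP [lo_x x_hi] := atoms 0%N isT.
have /andP [lo_s s_hi] := IH (fun i => atoms i.+1).
by rewrite sigma_r_add !mulrSr !mulrDl !mul1r; apply/andP; split; lra.
Qed.

Lemma min_lengthP {a} : (exists k, lengths ends a k) ->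
  lengths ends a (min_length ends a) /\
  forall j, lengths ends a j -> (min_length ends a <= j)%N.
Proof.
case=> k ak.
have ex_len : exists n, `[< lengths ends a n >] by exists k; apply/asboolP.
have [k0 /asboolP ak0 k0_min] := ex_minnP ex_len.
pose least k := lengths ends a k /\ forall j, lengths ends a j -> (k <= j)%N.
have k0_least : least k0 by split=> // j aj; apply/k0_min/asboolP.
exact: (@xgetPex _ 0%N least (ex_intro _ k0 k0_least)).
Qed.

Lemma rho_elt_le a : (rho_elt ends R a <= (hi / lo)%:E)%E.
Proof.
have ratio_ge0 : 0 <= hi / lo by rewrite divr_ge0 // ltW // (lt_le_trans lo_gt0).
rewrite /rho_elt; case: asboolP => [_ | a_neq0].
  by rewrite lee_fin ler_pdivlMr // mul1r.
have [[k ak] | no_len] := pselect (exists k, lengths ends a k); last first.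
  (* no factorisation: min_length falls back to 0, and 0^-1 = 0 *)
  suff -> : min_length ends a = 0%N by rewrite invr0 mule0 lee_fin.
  by apply: xgetPN => j [aj _]; apply: no_len; exists j.
have [amin min_le] := min_lengthP (ex_intro _ k ak).
set k0 := min_length ends a in amin min_le *.
have k0_gt0 : (0 < k0)%N.
  case: amin => s [<- [_ aE]]; rewrite lt0n size_eq0; apply: contra_notN a_neq0.
  by rewrite aE => /eqP ->.
have sup_le : (ereal_sup [set k%:R%:E | k in lengths ends a] <= (k0%:R * hi / lo)%:E)%E.
  apply: ge_ereal_sup => _ [j aj <-]; rewrite lee_fin ler_pdivlMr //.
  have /andP [lo_j _] := lengths_sigma_bounds aj.
  have /andP [_ k0_hi] := lengths_sigma_bounds amin.
  exact: le_trans lo_j k0_hi.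
apply: le_trans (lee_wpmul2r _ sup_le) _; first by rewrite lee_fin invr_ge0.
rewrite -EFinM lee_fin le_eqVlt; apply/orP; left; apply/eqP.
by field; rewrite pnatr_eq0 -lt0n k0_gt0 lt0r_neq0.
Qed.

Lemma rho_monoid_le : (rho_monoid ends R <= (hi / lo)%:E)%E.
Proof. by apply: ge_ereal_sup => _ [a _ <-]; apply: rho_elt_le. Qed.

End AtomBounds.

Lemma atom_card_bounds {u} : is_atom u ->
  [/\ 1 <= #|vsupp u|%:R :> R, #|vsupp u|%:R <= m%:R :> R
    & #|vsupp u|%:R <= #|esupp u|%:R + 1 :> R].
Proof.
move=> atom_u; rewrite natr1 !ler_nat ler1n.
by rewrite atom_vsupp_gt0 // atom_vsupp_le_max_comp // -addn1 atom_vsupp_le_esupp.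
Qed.

Lemma rho_monoid_le_degree_bound : (0 < #|V|)%N ->
  (rho_monoid ends R <= (m%:R - (m%:R - 1) / D%:R)%:E)%E.
Proof.
move=> /max_comp_order_gt0 m_gt0; have m_ge1 : 1 <= m%:R :> R by rewrite ler1n.
have [D0 | D_gt0] := posnP D.
  (* edgeless graph; the bound reads m since (m - 1) / 0 = 0 *)
  rewrite D0 invr0 mulr0 subr0 -[m%:R]divr1.
  apply: (rho_monoid_le 1) => // u atom_u.
  have f0 : #|esupp u| = 0%N by have := atom_handshake atom_u; rewrite D0; lia.
  have [w_ge1 w_le_m _] := atom_card_bounds atom_u.
  by rewrite sigma_r_atom // f0 mul1r subr0 w_ge1.
have D_ge1 : 1 <= D%:R :> R by rewrite ler1n.
have -> : m%:R - (m%:R - 1) / D%:R = ((D%:R - 1) * m%:R + 1) / D%:R :> R.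
  by field; rewrite pnatr_eq0 -lt0n.
apply: (rho_monoid_le D%:R); first by rewrite ltr0n.
  have : 0 <= (D%:R - 1) * (m%:R - 1) :> R by apply: mulr_ge0; rewrite subr_ge0.
  nra.
move=> u atom_u; rewrite sigma_r_atom //.
have [w_ge1 w_le_m w_le_f1] := atom_card_bounds atom_u.
have := atom_handshake atom_u; rewrite -(ler_nat R) !natrM => hs.
apply/andP; split.
  have [-> | f_gt0] := posnP #|esupp u|; first by rewrite subr0; nra.
  have := agglo_vsupp_gt1 (proj1 atom_u) f_gt0; rewrite -(ler_nat R) => w_ge2.
  nra.
nra.
Qed.

Lemma rho_monoid_le_simple_bound : (0 < #|V|)%N -> simple_graph ends ->
  (rho_monoid ends R <= (m%:R - 2 + 2 / m%:R)%:E)%E.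
Proof.
move=> /max_comp_order_gt0 m_gt0 simple; have m_ge1 : 1 <= m%:R :> R by rewrite ler1n.
have -> : m%:R - 2 + 2 / m%:R = ((m%:R / 2 - 1) * m%:R + 1) / (m%:R / 2) :> R.
  by field; rewrite pnatr_eq0 -lt0n.
apply: (rho_monoid_le (m%:R / 2)); first by rewrite divr_gt0 ?ltr0n.
  by have := natr_sub2_mul_ge0 (R := R) (leqnn 1) m_gt0; nra.
move=> u atom_u; rewrite sigma_r_atom //.
have [w_ge1 w_le_m w_le_f1] := atom_card_bounds atom_u.
have := simple_esupp_le_bin2 simple (proj1 atom_u).
rewrite bin2 geq_half_double -mul2n -(ler_nat R) !natrM -subn1 natrB ?atom_vsupp_gt0 //.
move=> f_le_bin2; apply/andP; split.
  have : 0 <= (#|vsupp u|%:R - 1) * (m%:R - #|vsupp u|%:R) :> R.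
    by apply: mulr_ge0; rewrite subr_ge0.
  nra.
have := natr_sub2_mul_ge0 (R := R) (atom_vsupp_gt0 atom_u)
  (atom_vsupp_le_max_comp atom_u).
nra.
Qed.

End Graph.

Theorem theorem4p13 (R : realType) (V E : finType) (ends : E -> V * V)
  (noloop : forall e, (ends e).1 != (ends e).2)
  (nonnull : (0 < #|V|)%N) :
  (forall r : R, (max_degree ends)%:R / 2 < r -> semi_length ends (@sigma_r V E R r))
  /\ (rho_monoid ends R <=
        ((max_comp_order ends)%:R
         - ((max_comp_order ends)%:R - 1) / (max_degree ends)%:R)%:E)%E
  /\ (simple_graph ends ->
      (rho_monoid ends R <=
        ((max_comp_order ends)%:R - 2 + 2 / (max_comp_order ends)%:R)%:E)%E).
Proof.
split; first exact: sigma_r_semi_length.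
split; first exact: rho_monoid_le_degree_bound.
exact: rho_monoid_le_simple_bound.
Qed.
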